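(* If $X$ is a minimal dendric shift over $\mathcal{A}$ that is planar for the pair of total orders $(\le^L,\le^R)$, then $G^L(X)=G(\le^L)$ and $G^R(X)=G(\le^R)$.
   Context: Shift spaces over a finite alphabet $\mathcal{A}$: nonempty closed shift-invariant $X\subseteq\mathcal{A}^{\mathbb{Z}}$, language $\mathcal{L}(X)$ containing all letters, $\mathcal{L}_n(X)$ its words of length $n$; minimal if no nonempty proper closed invariant subset. $E^L_X(w)=\{a:aw\in\mathcal{L}(X)\}$, $E^R_X(w)=\{b:wb\in\mathcal{L}(X)\}$, $E_X(w)=\{(a,b):awb\in\mathcal{L}(X)\}$; $\mathcal{E}_X(w)$ bipartite graph on disjoint copies of $E^L_X(w),E^R_X(w)$ with edges $E_X(w)$; $X$ dendric if every $\mathcal{E}_X(w)$ is a tree. $X$ is planar for $(\le^L,\le^R)$ if for every $w\in\mathcal{L}(X)$ and all $(a_1,b_1),(a_2,b_2)\in E_X(w)$, $a_1<^La_2$ implies $b_1\le^Rb_2$. Multi-clique $G(\{C_1,\dots,C_k\})$ on $\mathcal{A}$: every pair of distinct elements of $C_i$ joined by an edge of color $c_i$, colors distinct; colored multigraphs identified up to bijection of colors. For a dendric (or eventually dendric) shift there is $N$ such that for $n\ge N$ the multi-clique built from the family $(E^L_X(v))_{v\in\mathcal{L}_n(X)}$ does not depend on $n$; this is $G^L(X)$; $G^R(X)$ is defined likewise from right extensions. For a total order $\le$ with $c_1<c_2<\dots<c_n$ the letters of $\mathcal{A}$, $G(\le)$ is the graph on $\mathcal{A}$ whose edges are $\{c_i,c_{i+1}\}$,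 $i<n$, each with its own color. *)

From mathcomp Require Import all_boot all_order all_algebra.
From mathcomp Require Import boolp.
Set Implicit Arguments. Unset Strict Implicit. Unset Printing Implicit Defensive.
Import Order.TTheory GRing.Theory Num.Theory.

Section Shifts.
Variable A : finType.

Definition shiftmap (x : int -> A) : int -> A := fun i => x (i + 1)%R.

Definition window (x : int -> A) (i : int) (n : nat) : seq A :=
  [seq x (i + k%:Z)%R | k <- iota 0 n].

(* X is closed in the product topology: any point all of whose central
   blocks x_[-n,n] agree with some point of X belongs to X *)
Definition closed_shift (X : (int -> A) -> Prop) : Prop :=
  forall x, (forall n : nat, exists y, X y /\
                forall i : int, (- n%:Z <= i <= n%:Z)%R -> x i = y i) -> X x.

Definition shift_invariant (X : (int -> A) -> Prop) : Prop :=
  forall x, X x <-> X (shiftmap x).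

Definition subshift (X : (int -> A) -> Prop) : Prop :=
  (exists x, X x) /\ closed_shift X /\ shift_invariant X.

Definition minimal_shift (X : (int -> A) -> Prop) : Prop :=
  subshift X /\
  forall Y, subshift Y -> (forall x, Y x -> X x) -> forall x, X x -> Y x.

Definition inL (X : (int -> A) -> Prop) (w : seq A) : bool :=
  `[< exists x, X x /\ exists i, w = window x i (size w) >].

Definition EL X (w : seq A) : {set A} := [set a | inL X (a :: w)].
Definition ER X (w : seq A) : {set A} := [set b | inL X (rcons w b)].
Definition E2 X (w : seq A) : {set A * A} :=
  [set ab | inL X (ab.1 :: rcons w ab.2)].

Definition ext_vertices X w : {set A + A} :=
  [set inl a | a in EL X w] :|: [set inr b | b in ER X w].

Definition ext_edge X w : rel (A + A) := fun u v =>
  match u, v with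
  | inl a, inr b => (a, b) \in E2 X w
  | inr b, inl a => (a, b) \in E2 X w
  | _, _ => false
  end.

Definition is_tree (T : finType) (V : {set T}) (e : rel T) : Prop :=
  V != set0 /\
  (forall u v, u \in V -> v \in V -> connect e u v) /\
  (forall p : seq T, {subset p <= V} -> uniq p -> 2 < size p -> ~~ cycle e p).

Definition dendric X : Prop :=
  forall w, inL X w -> is_tree (ext_vertices X w) (ext_edge X w).

Definition total_order (le : rel A) : Prop :=
  reflexive le /\ antisymmetric le /\ transitive le /\ total le.

Definition planar X (leL leR : rel A) : Prop :=
  forall w, inL X w -> forall a1 b1 a2 b2,
    (a1, b1) \in E2 X w -> (a2, b2) \in E2 X w ->
    (a1 != a2) && leL a1 a2 -> leR b1 b2.

(* Colored multigraphs on A: a finite list of color classes, the i-th entry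
   being the set of (unordered) edges, i.e. 2-subsets of A, of color i. *)
Definition colored_multigraph := seq {set {set A}}.

(* identification up to a bijection of the colors (colors carrying no edge
   are not part of the graph) *)
Definition cmg_iso (G1 G2 : colored_multigraph) : Prop :=
  perm_eq [seq E <- G1 | E != set0] [seq E <- G2 | E != set0].

Definition clique_edges (C : {set A}) : {set {set A}} :=
  [set [set x; y] | x in C, y in C & x != y].

Definition multi_clique (F : seq {set A}) : colored_multigraph :=
  map clique_edges F.

Definition Ln X (n : nat) : seq (n.-tuple A) :=
  enum (fun t : n.-tuple A => inL X t).

Definition GLn X n : colored_multigraph :=
  multi_clique [seq EL X (tval t) | t <- Ln X n].
Definition GRn X n : colored_multigraph :=
  multi_clique [seq ER X (tval t) | t <- Ln X n].

Definition G_order (le : rel A) : colored_multigraph :=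
  let s := sort le (enum A) in
  [seq [set [set p.1; p.2]] | p <- zip s (behead s)].

End Shifts.

From mathcomp Require Import all_boot all_order all_algebra.
From mathcomp Require Import boolp.
From mathcomp Require Import zify.
Set Implicit Arguments. Unset Strict Implicit. Unset Printing Implicit Defensive.

(* Number the letters c_0 < c_1 < ... < c_(k-1) along <=^L. Planarity makes
   every set of left extensions E^L(w) an interval of this chain, and forces
   two words of the same length whose left extensions both contain c_i and
   c_(i+1) to be equal; connectedness of the extension graphs provides such a
   word in every length. If three consecutive letters a < b < c were left
   extensions of arbitrarily long words, planarity would give b a unique
   right-infinite continuation r, which uniform recurrence of b (a consequence
   of minimality) makes periodic; reading r back from an occurrence of b to
   the left of a then yields a = b. So for long words E^L(w) has at most two
   elements, and the nonempty cliques are exactly the edges {c_i, c_(i+1)},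
   each realized by exactly one word. Reversing words exchanges left and
   right. *)

(* The extension graph of w enters only through its connectedness, in the
   form: a labelling of its vertices constant along edges is constant. *)
Record planar_language (A : finType) (L : seq A -> bool) (leL leR : rel A) :
    Prop := {
  lang_behead : forall a w, L (a :: w) -> L w;
  lang_belast : forall w b, L (rcons w b) -> L w;
  lang_extl : forall w, L w -> exists a, L (a :: w);
  lang_extr : forall w, L w -> exists b, L (rcons w b);
  lang_letter : forall a, L [:: a];
  lang_connected : forall w, L w -> forall p : A + A -> bool,
    (forall a b, L (a :: rcons w b) -> p (inl a) = p (inr b)) ->
    (forall a a', L (a :: w) -> L (a' :: w) -> p (inl a) = p (inl a')) /\
    (forall b b', L (rcons w b) -> L (rcons w b') -> p (inr b) = p (inr b'));
  lang_planar : forall w a1 b1 a2 b2,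
    L (a1 :: rcons w b1) -> L (a2 :: rcons w b2) ->
    a1 != a2 -> leL a1 a2 -> leR b1 b2;
  lang_recurrent : forall b, exists N, forall w,
    L w -> N <= size w -> b \in w }.

Lemma planar_language_rev (A : finType) (L : seq A -> bool) leL leR :
  total_order leL -> total_order leR -> planar_language L leL leR ->
  planar_language (fun w => L (rev w)) leR leL.
Proof.
move=> [leL_refl [_ [_ leL_tot]]] [_ [leR_anti _]] HL.
split.
- by move=> a w; rewrite rev_cons => /(lang_belast HL).
- by move=> w b; rewrite rev_rcons => /(lang_behead HL).
- by move=> w /(lang_extr HL) [a La]; exists a; rewrite rev_cons.
- by move=> w /(lang_extl HL) [b Lb]; exists b; rewrite rev_rcons.
- exact: lang_letter HL.
- move=> w Lw p p_edge.
  pose q (u : A + A) := match u with inl x => p (inr x) | inr y => p (inl y) end.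
  have q_edge x y : L (x :: rcons (rev w) y) -> q (inl x) = q (inr y).
    by move=> Lxy /=; symmetry; apply: p_edge; rewrite rev_cons rev_rcons.
  have [q_left q_right] := lang_connected HL Lw q_edge.
  split => [a a'|b b']; rewrite ?rev_cons ?rev_rcons; [exact: q_right | exact: q_left].
- move=> w a1 b1 a2 b2; rewrite !rev_cons !rev_rcons => L1 L2 na le.
  case/orP: (leL_tot b1 b2) => // le21.
  have [<-|nb] := eqVneq b2 b1; first exact: leL_refl.
  move/negP: na; case; apply/eqP; apply: leR_anti.
  by rewrite le (lang_planar HL L2 L1 nb le21).
- move=> b; have [N recN] := lang_recurrent HL b; exists N => w Lw Nw.
  by rewrite -mem_rev; apply: recN; rewrite ?size_rev.
Qed.

Lemma zip_behead_nth (T : Type) (x0 : T) (s : seq T) :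
  zip s (behead s) = [seq (nth x0 s j, nth x0 s j.+1) | j <- iota 0 (size s).-1].
Proof.
elim: s => [//|x t IH]; case: t IH => [//|y t] IH /=.
by congr cons; rewrite IH /= -[1]addn0 iotaDl -map_comp.
Qed.

Lemma mkseqD (T : Type) (f : nat -> T) n1 n2 :
  mkseq f (n1 + n2) = mkseq f n1 ++ mkseq (fun j => f (n1 + j)) n2.
Proof.
rewrite /mkseq iotaD map_cat add0n; congr (_ ++ _).
by rewrite -[n1 in iota n1 _]addn0 iotaDl -map_comp.
Qed.

Lemma uniform_bound (P : nat -> nat -> Prop) K :
  (forall i n m, n <= m -> P i n -> P i m) ->
  (forall i, i < K -> exists n, P i n) -> exists N, forall i, i < K -> P i N.
Proof.
move=> P_up; elim: K => [|K IH] P_ex; first by exists 0.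
have [N1 h1] : exists N, forall i, i < K -> P i N.
  by apply: IH => i iK; apply: P_ex; apply: ltnW.
have [N2 h2] := P_ex K (ltnSn K).
exists (maxn N1 N2) => i; rewrite ltnS leq_eqVlt => /orP [/eqP ->|iK].
  exact: P_up (leq_maxr _ _) h2.
exact: P_up (leq_maxl _ _) (h1 _ iK).
Qed.

Lemma clique_edges_set2 (A : finType) (x y : A) :
  x != y -> clique_edges [set x; y] = [set [set x; y]].
Proof.
move=> nxy; apply/setP => E; rewrite inE /clique_edges.
apply/imset2P/eqP => [[u v]|->].
  rewrite !inE => /orP [] /eqP -> /andP [/orP [] /eqP -> ]; rewrite ?eqxx // => _ ->.
  by rewrite setUC.
by exists x y; rewrite // !inE eqxx ?orbT.
Qed.

Lemma clique_edges_neq0 (A : finType) (S : {set A}) : clique_edges S != set0 ->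
  exists x y, [/\ x \in S, y \in S & x != y].
Proof.
case/set0Pn => E /imset2P [u v uS]; rewrite inE => /andP [vS nuv] _.
by exists u, v.
Qed.

Definition realizes (A : finType) n (P : seq A -> bool) (f : seq A -> {set A})
    (G : seq {set {set A}}) : Prop :=
  (forall w1 w2, size w1 = n -> size w2 = n -> P w1 -> P w2 ->
     clique_edges (f w1) = clique_edges (f w2) -> clique_edges (f w1) != set0 ->
     w1 = w2) /\
  (forall E, E \in G <->
     exists w, [/\ size w = n, P w, E = clique_edges (f w) & E != set0]).

Lemma realizes_rev (A : finType) n (P P' : seq A -> bool) (f f' : seq A -> {set A}) G :
  (forall w, P' w = P (rev w)) -> (forall w, f' w = f (rev w)) ->
  realizes n P f G -> realizes n P' f' G.
Proof.
move=> eP ef [f_inj G_mem]; split => [w1 w2 s1 s2 P1 P2|E].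
  rewrite !ef => e ne; apply: (can_inj revK).
  by apply: f_inj; rewrite ?size_rev -?eP.
rewrite G_mem; split=> [] [w [sw Pw -> ne]]; exists (rev w).
  by rewrite size_rev eP ef !revK.
by rewrite size_rev -eP -ef.
Qed.

Lemma cmg_iso_realizes (A : finType) n (P : seq A -> bool) f G : uniq G ->
  realizes n P f G ->
  cmg_iso (multi_clique [seq f (val t) | t <- enum (fun t : n.-tuple A => P t)]) G.
Proof.
move=> uG [f_inj G_mem].
have G_neq0 E : E \in G -> E != set0 by case/G_mem => w [].
rewrite /cmg_iso /multi_clique -map_comp.
have -> : [seq E <- G | E != set0] = G by apply/all_filterP/allP.
apply: uniq_perm => //.
  rewrite filter_map map_inj_in_uniq; first by rewrite filter_uniq // enum_uniq.
  move=> t1 t2; rewrite !mem_filter /= => /and3P [n1 P1 _] /and3P [n2 P2 _] e.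
  by apply: val_inj; apply: f_inj; rewrite ?size_tuple.
move=> E; rewrite mem_filter; apply/andP/idP.
  move=> [ne /mapP [t]]; rewrite mem_enum => Pt eE; apply/G_mem.
  by exists (val t); rewrite size_tuple.
move=> /G_mem [w [/eqP sw Pw eE ne]]; split => //.
by apply/mapP; exists (Tuple sw); rewrite ?mem_enum.
Qed.

Section PlanarLanguage.
Variables (A : finType) (a0 : A) (L : seq A -> bool) (leL leR : rel A).
Hypothesis HL : planar_language L leL leR.
Hypothesis leL_total : total_order leL.
Hypothesis leR_total : total_order leR.

Let s := sort leL (enum A).
Let k := size s.
Definition rankL a := index a s.
Definition unrankL i := nth a0 s i.

Lemma sortL_uniq : uniq s.
Proof. by rewrite sort_uniq enum_uniq. Qed.

Lemma mem_sortL a : a \in s.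
Proof. by rewrite mem_sort mem_enum. Qed.

Lemma rankL_lt a : rankL a < k.
Proof. by rewrite /rankL index_mem mem_sortL. Qed.

Lemma rankLK : cancel rankL unrankL.
Proof. by move=> a; rewrite /unrankL /rankL nth_index // mem_sortL. Qed.

Lemma unrankLK i : i < k -> rankL (unrankL i) = i.
Proof. by move=> ik; rewrite /rankL /unrankL index_uniq // sortL_uniq. Qed.

Lemma unrankL_neq j : j.+1 < k -> unrankL j != unrankL j.+1.
Proof.
move=> jk; apply/eqP => /(congr1 rankL).
by rewrite (unrankLK jk) (unrankLK (ltnW jk)) => /n_Sn.
Qed.

Lemma leL_rank a b : leL a b = (rankL a <= rankL b).
Proof.
have [leL_refl [leL_anti [leL_trans leL_tot]]] := leL_total.
have sorted_s : sorted leL s := sort_sorted leL_tot (enum A).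
have index_le u v : rankL u <= rankL v -> leL u v.
  exact: sorted_leq_index leL_trans leL_refl _ sorted_s _ _ (mem_sortL u) (mem_sortL v).
apply/idP/idP => [lab|]; last exact: index_le.
rewrite leqNgt; apply/negP => lt.
have lba := index_le _ _ (ltnW lt).
by move: lt; rewrite (leL_anti a b) ?lab ?lba ?ltnn.
Qed.

Lemma planar_rankL_le w a1 b1 a2 b2 :
  L (a1 :: rcons w b1) -> L (a2 :: rcons w b2) -> b1 != b2 -> leR b1 b2 ->
  rankL a1 <= rankL a2.
Proof.
move=> h1 h2 nb lb; rewrite leqNgt; apply/negP => lt.
have na : a2 != a1 by apply/eqP => e; move: lt; rewrite e ltnn.
have lb2 : leR b2 b1 by apply: (lang_planar HL h2 h1 na); rewrite leL_rank ltnW.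
case: leR_total => _ [leR_anti _].
by move/negP: nb; apply; apply/eqP; apply: leR_anti; rewrite lb lb2.
Qed.

Lemma lang_prefix u v : L (u ++ v) -> L u.
Proof.
elim/last_ind: v => [|v b IH]; first by rewrite cats0.
by rewrite -rcons_cat => /(lang_belast HL) /IH.
Qed.

Lemma lang_suffix u v : L (u ++ v) -> L v.
Proof. by elim: u => [//|a u IH] /= /(lang_behead HL) /IH. Qed.

Lemma lang_extend_left n w : L w -> exists x, size x = n /\ L (x ++ w).
Proof.
move=> Lw; elim: n => [|n [x [sx Lxw]]]; first by exists [::].
by have [a Laxw] := lang_extl HL Lxw; exists (a :: x); rewrite /= sx.
Qed.

Definition ext_left w : {set A} := [set a | L (a :: w)].

Lemma lang_of_ext_left w a : a \in ext_left w -> L w.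
Proof. by rewrite inE => /(lang_behead HL). Qed.

Lemma ext_left_take m w a : a \in ext_left w -> a \in ext_left (take m w).
Proof.
by rewrite !inE -{1}(cat_take_drop m w) -cat_cons => /lang_prefix.
Qed.

Lemma ext_left_rcons w b a : a \in ext_left (rcons w b) -> a \in ext_left w.
Proof. by move/(ext_left_take (size w)); rewrite -cats1 take_size_cat. Qed.

Lemma ext_left_interval w x y z : rankL x <= rankL y <= rankL z ->
  x \in ext_left w -> z \in ext_left w -> y \in ext_left w.
Proof.
elim/last_ind: w => [|w b IH]; first by move=> *; rewrite inE (lang_letter HL).
move=> /andP [xy yz] xS zS.
have : y \in ext_left w by apply: IH (ext_left_rcons xS) (ext_left_rcons zS); rewrite xy.
rewrite inE => /(lang_extr HL) [e he].
rewrite rcons_cons in he.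
have [<-|neb] := eqVneq e b; first by rewrite inE.
rewrite !inE in xS zS.
case: leR_total => _ [_ [_ leR_tot]].
case/orP: (leR_tot b e) => le.
  have zy : rankL z <= rankL y by apply: planar_rankL_le zS he _ le; rewrite eq_sym.
  by rewrite inE (_ : y = z) //; apply: (can_inj rankLK); lia.
have yx : rankL y <= rankL x by apply: planar_rankL_le he xS neb le.
by rewrite inE (_ : y = x) //; apply: (can_inj rankLK); lia.
Qed.

Definition covers w i := (unrankL i \in ext_left w) && (unrankL i.+1 \in ext_left w).

Lemma covers_take m w i : covers w i -> covers (take m w) i.
Proof. by case/andP => ci ci1; rewrite /covers !ext_left_take. Qed.

Lemma covers_rcons w b i : covers (rcons w b) i -> covers w i.
Proof. by move/(covers_take (size w)); rewrite -cats1 take_size_cat. Qed.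

(* If no one-letter extension of w covered i, splitting the left vertices of
   the extension graph of w at c_i would disconnect it. *)
Lemma covers_exists n i : i.+1 < k -> exists w, size w = n /\ covers w i.
Proof.
move=> ik; elim: n => [|n [w [sw cw]]].
  by exists [::]; rewrite /covers !inE !(lang_letter HL).
have Lw : L w by case/andP: cw => /lang_of_ext_left.
apply: contrapT => no_cover.
have {}no_cover e : ~~ covers (rcons w e) i.
  by apply/negP => ce; apply: no_cover; exists (rcons w e); rewrite size_rcons sw.
pose p (u : A + A) := match u with
  | inl a => rankL a <= i
  | inr e => [exists a, (a \in ext_left (rcons w e)) && (rankL a <= i)] end.
have p_edge a b : L (a :: rcons w b) -> p (inl a) = p (inr b).
  move=> Lab /=; have aS : a \in ext_left (rcons w b) by rewrite inE.
  have [ai|ia] := leqP (rankL a) i.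
    by symmetry; apply/existsP; exists a; rewrite aS ai.
  symmetry; apply/existsP => -[a' /andP [a'S a'i]].
  have ci : unrankL i \in ext_left (rcons w b).
    by apply: ext_left_interval a'S aS; rewrite unrankLK ?a'i ?(ltnW ia) // ltnW.
  have ci1 : unrankL i.+1 \in ext_left (rcons w b).
    by apply: ext_left_interval a'S aS; rewrite unrankLK // ia (leq_trans a'i).
  by move/negP: (no_cover b); apply; rewrite /covers ci ci1.
have [p_left _] := lang_connected HL Lw p_edge.
case/andP: cw; rewrite !inE => ci ci1.
by move: (p_left _ _ ci ci1); rewrite /= (unrankLK (ltnW ik)) (unrankLK ik) leqnn ltnn.
Qed.

(* Two distinct last letters would make the edges at c_i and c_(i+1) cross. *)
Lemma covers_unique w1 w2 i : i.+1 < k -> size w1 = size w2 ->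
  covers w1 i -> covers w2 i -> w1 = w2.
Proof.
move=> ik; elim/last_ind: w1 w2 => [|w1 b1 IH] w2; first by case: w2.
case/lastP: w2 => [|w2 b2]; first by rewrite size_rcons.
rewrite !size_rcons => -[sw] c1 c2.
have ew := IH _ sw (covers_rcons c1) (covers_rcons c2); subst w2.
congr rcons; apply/eqP; apply: contraT => nb.
case/andP: c1; case/andP: c2; rewrite !inE => x2 y2 x1 y1.
have [_ [_ [_ leR_tot]]] := leR_total.
have r_i := unrankLK (ltnW ik); have r_i1 := unrankLK ik.
case/orP: (leR_tot b1 b2) => le.
  by have := planar_rankL_le y1 x2 nb le; rewrite r_i r_i1 ltnn.
by have := planar_rankL_le y2 x1 _ le; rewrite eq_sym r_i r_i1 ltnn => /(_ nb).
Qed.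

Lemma covering_sequence i : i.+1 < k ->
  exists r, forall w, covers w i -> w = mkseq r (size w).
Proof.
move=> ik.
pose W n := sval (cid (covers_exists n ik)).
have WP n : size (W n) = n /\ covers (W n) i := svalP (cid (covers_exists n ik)).
exists (fun j => nth a0 (W j.+1) j) => w cw.
apply: (@eq_from_nth _ a0); rewrite ?size_mkseq // => j jw.
rewrite nth_mkseq // -(nth_take a0 (ltnSn j)); congr nth.
have [sW cW] := WP j.+1.
by apply: covers_unique (covers_take _ cw) cW => //; rewrite size_takel.
Qed.

Lemma card_gt2_consecutive w : 2 < #|ext_left w| -> exists i, [/\ i.+2 < k,
  unrankL i \in ext_left w, unrankL i.+1 \in ext_left w & unrankL i.+2 \in ext_left w].
Proof.
move=> /card_gt2P [x [y [z [[xS yS zS] [nxy nyz nzx]]]]].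
have [m mS m_min] := arg_minnP rankL xS.
have [M MS M_max] := arg_maxnP rankL xS.
have rank_neq u v : u != v -> rankL u != rankL v.
  by apply: contra => /eqP /(can_inj rankLK) ->.
have gap : rankL m + 2 <= rankL M.
  move: (m_min _ xS) (m_min _ yS) (m_min _ zS) (M_max _ xS) (M_max _ yS) (M_max _ zS).
  by move: (rank_neq _ _ nxy) (rank_neq _ _ nyz) (rank_neq _ _ nzx); lia.
have Mk := rankL_lt M.
exists (rankL m); split; first by lia.
- by rewrite rankLK.
- by apply: ext_left_interval mS MS; rewrite unrankLK; lia.
- by apply: ext_left_interval mS MS; rewrite unrankLK; lia.
Qed.

Lemma ext_right_forced u a b c e e' : rankL a < rankL b < rankL c ->
  L (a :: rcons u e) -> L (c :: rcons u e) -> L (b :: rcons u e') -> e' = e.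
Proof.
move=> /andP [ab bc] Lae Lce Lbe'; apply/eqP; apply: contraT => ne.
have [_ [_ [_ leR_tot]]] := leR_total.
case/orP: (leR_tot e' e) => le.
  by have := planar_rankL_le Lbe' Lae ne le; rewrite leqNgt ab.
by have := planar_rankL_le Lce Lbe' _ le; rewrite eq_sym leqNgt bc => /(_ ne).
Qed.

Lemma follower_on_sequence r a b c : rankL a < rankL b < rankL c ->
  (forall n, L (a :: mkseq r n) /\ L (c :: mkseq r n)) ->
  forall u, L (b :: u) -> u = mkseq r (size u).
Proof.
move=> abc ac; elim/last_ind => [//|u e IH].
rewrite -rcons_cons => Lbue; have Lbu := lang_belast HL Lbue.
rewrite rcons_cons (IH Lbu) in Lbue *; rewrite size_rcons size_mkseq mkseqS.
have [Lae Lce] := ac (size u).+1; rewrite mkseqS in Lae Lce.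
by rewrite (ext_right_forced abc Lae Lce Lbue).
Qed.

(* Uniform recurrence: b occurs at some place p of r, and what follows that
   occurrence is again forced to be r. *)
Lemma forced_follower_periodic r b :
  (forall u, L (b :: u) -> u = mkseq r (size u)) -> (forall n, L (b :: mkseq r n)) ->
  exists p, r p = b /\ forall m, r (p.+1 + m) = r m.
Proof.
move=> forced Lbr.
have [N recN] := lang_recurrent HL b.
have : b \in mkseq r N.
  by apply: recN; rewrite ?size_mkseq // (lang_behead HL (Lbr N)).
move=> /nthP -/(_ b) [p]; rewrite size_mkseq => pN; rewrite nth_mkseq // => rp.
exists p; split => // m.
have := Lbr (p.+1 + m.+1); rewrite mkseqD mkseqS rp cat_rcons -cat_cons.
move=> /lang_suffix /forced /(congr1 (nth a0 ^~ m)).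
by rewrite size_mkseq !nth_mkseq.
Qed.

(* Extending a r_0 ... r_p leftwards until b appears, the forced follower of
   that b reads a at a place where the period of r puts b. *)
Lemma forced_follower_left_ext_eq r b :
  (forall u, L (b :: u) -> u = mkseq r (size u)) -> (forall n, L (b :: mkseq r n)) ->
  exists n, forall a, L (a :: mkseq r n) -> a = b.
Proof.
move=> forced Lbr.
have [p [rp r_per]] := forced_follower_periodic forced Lbr.
have [N recN] := lang_recurrent HL b.
exists p.+1 => a La.
have [x [sx Lx]] := lang_extend_left N La.
have bx : b \in x by apply: recN (lang_prefix Lx) _; rewrite sx.
case/splitPr: x / bx sx Lx => x1 x2 _ Lx.
rewrite -catA /= in Lx; have /forced e := lang_suffix Lx.
have {}e j : j < size x2 + p.+2 -> nth a0 (x2 ++ a :: mkseq r p.+1) j = r j.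
  by move=> jn; rewrite {1}e nth_mkseq // size_cat /= size_map size_iota.
have ea : a = r (size x2).
  by rewrite -e; [rewrite nth_cat ltnn subnn | lia].
have eb : b = r (size x2 + p.+1).
  by rewrite -e; [rewrite nth_cat ltnNge leq_addr addKn /= nth_mkseq | lia].
by rewrite ea eb addnC r_per.
Qed.

Definition three_consecutive i n := exists w, size w = n /\
  [/\ unrankL i \in ext_left w, unrankL i.+1 \in ext_left w & unrankL i.+2 \in ext_left w].

Lemma three_consecutive_take i n m : n <= m ->
  three_consecutive i m -> three_consecutive i n.
Proof.
move=> nm [w [sw [ci ci1 ci2]]].
by exists (take n w); rewrite size_takel ?sw // !ext_left_take.
Qed.

Lemma three_consecutive_bounded i : i.+2 < k -> exists n, ~ three_consecutive i n.
Proof.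
move=> ik; apply: contrapT => /forallNP unbounded.
have [r r_cover] := covering_sequence (ltnW ik).
have in_ext n : [/\ L (unrankL i :: mkseq r n), L (unrankL i.+1 :: mkseq r n)
                  & L (unrankL i.+2 :: mkseq r n)].
  have /contrapT [w [<- [ci ci1 ci2]]] := unbounded n.
  have <- : w = mkseq r (size w) by rewrite -r_cover // /covers ci ci1.
  by rewrite !inE in ci ci1 ci2.
have r_i := unrankLK (ltnW (ltnW ik)); have r_i1 := unrankLK (ltnW ik).
have r_i2 := unrankLK ik.
have forced : forall u, L (unrankL i.+1 :: u) -> u = mkseq r (size u).
  apply: (follower_on_sequence (a := unrankL i) (c := unrankL i.+2)).
    by rewrite r_i r_i1 r_i2 !ltnSn.
  by move=> n; case: (in_ext n).
have [n left_ext] : exists n, forall a, L (a :: mkseq r n) -> a = unrankL i.+1.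
  by apply: forced_follower_left_ext_eq forced _ => n; case: (in_ext n).
have /left_ext /(congr1 rankL) : L (unrankL i :: mkseq r n) by case: (in_ext n).
by rewrite r_i r_i1 => /n_Sn.
Qed.

Lemma ext_left_card_le2 : exists N, forall w, N <= size w -> #|ext_left w| <= 2.
Proof.
have [N no_three] : exists N, forall i, i < k -> i.+2 < k -> ~ three_consecutive i N.
  apply: uniform_bound => [i n m nm no_three ik /(three_consecutive_take nm)|i _].
    exact: no_three.
  have [ik|_] := ltnP i.+2 k; last by exists 0.
  by have [n no_three] := three_consecutive_bounded ik; exists n.
exists N => w Nw; rewrite leqNgt; apply/negP => /card_gt2_consecutive [i [ik ci ci1 ci2]].
apply: (no_three i) => //; first by apply: ltn_trans ik; apply: ltnW.
by apply: three_consecutive_take Nw _; exists w.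
Qed.

Lemma unrankL_pair_inj j1 j2 : j1.+1 < k -> j2.+1 < k ->
  [set unrankL j1; unrankL j1.+1] = [set unrankL j2; unrankL j2.+1] -> j1 = j2.
Proof.
move=> j1k j2k e.
have : unrankL j1 \in [set unrankL j2; unrankL j2.+1] by rewrite -e set21.
have : unrankL j2 \in [set unrankL j1; unrankL j1.+1] by rewrite e set21.
rewrite !inE => /orP [] /eqP /(congr1 rankL) + /orP [] /eqP /(congr1 rankL).
all: by rewrite !unrankLK ?(ltnW j1k) ?(ltnW j2k); lia.
Qed.

Lemma ext_left_pair w : #|ext_left w| <= 2 -> clique_edges (ext_left w) != set0 ->
  exists2 j, j.+1 < k & ext_left w = [set unrankL j; unrankL j.+1].
Proof.
move=> card2 /clique_edges_neq0 [x [y [xS yS nxy]]].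
have eS : ext_left w = [set x; y].
  apply/eqP; rewrite eq_sym eqEcard cards2 nxy card2 andbT.
  by apply/subsetP => z; rewrite in_set2 => /orP [] /eqP ->.
wlog lt : x y xS yS nxy eS / rankL x < rankL y.
  move=> H; have [l|l|l] := ltngtP (rankL x) (rankL y); first exact: (H x y).
    by apply: (H y x) => //; rewrite 1?eq_sym // setUC.
  by move: nxy; rewrite (can_inj rankLK l) eqxx.
have xk : (rankL x).+1 < k := leq_ltn_trans lt (rankL_lt y).
exists (rankL x) => //; rewrite eS rankLK; congr [set _; _].
apply: (can_inj rankLK); rewrite unrankLK //; apply/eqP; rewrite eqn_leq lt andbT.
have : unrankL (rankL x).+1 \in ext_left w.
  by apply: ext_left_interval xS yS; rewrite unrankLK // leqnSn.
by rewrite eS !inE => /orP [] /eqP /(congr1 rankL); rewrite unrankLK //; lia.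
Qed.

Lemma G_order_eq :
  G_order leL = [seq [set [set unrankL j; unrankL j.+1]] | j <- iota 0 k.-1].
Proof. by rewrite /G_order (zip_behead_nth a0) -map_comp. Qed.

Lemma G_orderP E :
  E \in G_order leL <-> exists2 j, j.+1 < k & E = [set [set unrankL j; unrankL j.+1]].
Proof.
rewrite G_order_eq; split => [/mapP [j] | [j jk ->]].
  by rewrite mem_iota add0n => /andP [_ jk] ->; exists j => //; lia.
by apply: map_f; rewrite mem_iota add0n; lia.
Qed.

Lemma G_order_uniq : uniq (G_order leL).
Proof.
rewrite G_order_eq map_inj_in_uniq ?iota_uniq // => j1 j2.
by rewrite !mem_iota !add0n => j1k j2k /set1_inj /unrankL_pair_inj; apply; lia.
Qed.

Lemma realizes_G_order :
  exists N, forall n, N <= n -> realizes n L ext_left (G_order leL).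
Proof.
have [N card2] := ext_left_card_le2.
have clique_pair j : j.+1 < k ->
    clique_edges [set unrankL j; unrankL j.+1] = [set [set unrankL j; unrankL j.+1]].
  by move=> jk; rewrite clique_edges_set2 // unrankL_neq.
have covers_pair w j : j.+1 < k -> covers w j -> #|ext_left w| <= 2 ->
    ext_left w = [set unrankL j; unrankL j.+1].
  move=> jk /andP [cj cj1] card2w; apply/eqP; rewrite eq_sym eqEcard.
  by rewrite cards2 unrankL_neq // card2w subUset !sub1set cj cj1.
have cover_pair w j : ext_left w = [set unrankL j; unrankL j.+1] -> covers w j.
  by rewrite /covers => ->; rewrite !inE !eqxx orbT.
exists N => n Nn; have card2n w : size w = n -> #|ext_left w| <= 2.
  by move=> sw; apply: card2; rewrite sw.
split => [w1 w2 s1 s2 _ _ e ne|E].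
  have [j1 j1k e1] := ext_left_pair (card2n w1 s1) ne.
  have [j2 j2k e2] : exists2 j2, j2.+1 < k & ext_left w2 = [set unrankL j2; unrankL j2.+1].
    by apply: ext_left_pair (card2n w2 s2) _; rewrite -e.
  move: e; rewrite e1 e2 !clique_pair // => /set1_inj /unrankL_pair_inj ej.
  rewrite (ej j1k j2k) in e1.
  by apply: (covers_unique j2k); rewrite ?s1 ?s2 // cover_pair.
rewrite G_orderP; split => [[j jk ->]|[w [sw _ -> ne]]].
  have [w [sw cw]] := covers_exists n jk.
  have ew := covers_pair w j jk cw (card2n w sw).
  exists w; split => //.
  - by case/andP: cw => /lang_of_ext_left.
  - by rewrite ew clique_pair.
  - by apply/set0Pn; exists [set unrankL j; unrankL j.+1]; rewrite inE.
have [j jk ej] := ext_left_pair (card2n w sw) ne.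
by exists j; rewrite // ej clique_pair.
Qed.

End PlanarLanguage.

Section Compactness.
Local Open Scope ring_scope.
Variables (A : finType) (Y : nat -> int -> A).

Definition agree_on n (f g : int -> A) := forall m : int, (`|m| < n)%N -> f m = g m.

Definition frequent n f := forall K, exists k, (K <= k)%N /\ agree_on n f (Y k).

Definition set_ends n (p : A * A) (f : int -> A) : int -> A := fun m =>
  if m == - n%:Z then p.1 else if m == n%:Z then p.2 else f m.

(* Pigeonhole over the finitely many values at -n and n. *)
Lemma frequent_extend n f : frequent n f -> exists g, frequent n.+1 g /\ agree_on n g f.
Proof.
move=> freq_f; apply: contrapT => no_ext.
have rare p : exists K, forall k, (K <= k)%N -> ~ agree_on n.+1 (set_ends n p f) (Y k).
  have : ~ frequent n.+1 (set_ends n p f).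
    move=> freq; apply: no_ext; exists (set_ends n p f); split => // m hm.
    rewrite /set_ends; case: eqP => [e|_]; first by move: hm; rewrite e; lia.
    by case: eqP => [e|_] //; move: hm; rewrite e; lia.
  rewrite /frequent -existsNP => -[K not_freq]; exists K => k Kk ag.
  by apply: not_freq; exists k.
pose K p := sval (cid (rare p)).
have [k [Kk ag]] := freq_f (\max_(p : A * A) K p).
pose p := (Y k (- n%:Z), Y k n%:Z).
apply: (svalP (cid (rare p)) k); first exact: leq_trans (leq_bigmax (F := K) p) Kk.
move=> m hm; rewrite /set_ends.
case: eqP => [->//|n1]; case: eqP => [->//|n2].
by apply: ag; move/eqP: n1 => n1; move/eqP: n2 => n2; lia.
Qed.

Lemma frequent0 f : frequent 0 f.
Proof. by move=> K; exists K. Qed.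

Fixpoint frequent_chain n : {f | frequent n f} :=
  if n is n'.+1 then
    let c := cid (frequent_extend (svalP (frequent_chain n'))) in
    exist _ (sval c) (proj1 (svalP c))
  else exist _ (Y 0) (frequent0 (Y 0)).

Lemma frequent_chain_agree n m (x : int) : (`|x| < n)%N -> (n <= m)%N ->
  sval (frequent_chain m) x = sval (frequent_chain n) x.
Proof.
move=> xn; elim: m => [|m IH]; first by rewrite leqn0 => /eqP ->.
rewrite leq_eqVlt => /orP [/eqP -> //|]; rewrite ltnS => nm.
rewrite -(IH nm) /=; apply: (proj2 (svalP (cid (frequent_extend (svalP (frequent_chain m)))))).
exact: leq_trans xn nm.
Qed.

Lemma compactness : exists z, forall n K, exists k, (K <= k)%N /\ agree_on n z (Y k).
Proof.
exists (fun x => sval (frequent_chain `|x|.+1) x) => n K.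
have [k [Kk ag]] := svalP (frequent_chain n) K.
exists k; split => // m mn.
by rewrite -(frequent_chain_agree (n := `|m|.+1) (m := n)) ?ltnSn //; apply: ag.
Qed.

End Compactness.

Section ShiftLanguage.
Import GRing.Theory Num.Theory.
Local Open Scope ring_scope.
Variable A : finType.
Implicit Types (X : (int -> A) -> Prop) (x : int -> A).

Lemma size_window x i n : size (window x i n) = n.
Proof. by rewrite size_map size_iota. Qed.

Lemma window_cat x i m n :
  window x i (m + n) = window x i m ++ window x (i + m%:Z) n.
Proof.
rewrite /window iotaD map_cat; congr (_ ++ _).
rewrite add0n -[m in iota m _]addn0 iotaDl -map_comp; apply: eq_map => j /=.
by rewrite PoszD addrA.
Qed.

Lemma mem_window x i n (j : nat) : (j < n)%N -> x (i + j%:Z) \in window x i n.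
Proof. by move=> jn; apply: (map_f (fun k : nat => x (i + k%:Z))); rewrite mem_iota. Qed.

Lemma inL_window X x i n : X x -> inL X (window x i n).
Proof. by move=> Xx; apply/asboolP; exists x; split => //; exists i; rewrite size_window. Qed.

Lemma inLP X w : inL X w -> exists x i, X x /\ w = window x i (size w).
Proof. by move/asboolP => [x [Xx [i e]]]; exists x, i. Qed.

Lemma inL_cat X u v : inL X (u ++ v) -> inL X u /\ inL X v.
Proof.
move/inLP => [x [i [Xx e]]]; rewrite size_cat window_cat in e.
have eu : u = window x i (size u).
  by have := congr1 (take (size u)) e; rewrite !take_size_cat ?size_window.
have ev : v = window x (i + (size u)%:Z) (size v).
  by have := congr1 (drop (size u)) e; rewrite !drop_size_cat ?size_window.
by split; [rewrite eu | rewrite ev]; apply: inL_window.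
Qed.

Lemma shift_invariant_translate X x (c : int) : shift_invariant X -> X x ->
  X (fun m => x (m + c)).
Proof.
move=> X_inv Xx.
have up (n : nat) : X (fun m => x (m + n%:Z)).
  elim: n => [|n IH]; first by under eq_fun do rewrite addr0.
  have -> : (fun m => x (m + n.+1%:Z)) = shiftmap (fun m => x (m + n%:Z)).
    by apply: funext => m; rewrite /shiftmap; congr x; lia.
  exact: (X_inv _).1 IH.
have down (n : nat) : X (fun m => x (m - n%:Z)).
  elim: n => [|n IH]; first by under eq_fun do rewrite subr0.
  apply: (X_inv _).2; have -> : shiftmap (fun m => x (m - n.+1%:Z)) = (fun m => x (m - n%:Z)).
    by apply: funext => m; rewrite /shiftmap; congr x; lia.
  exact: IH.
by case: c => n; [apply: up | rewrite NegzE; apply: down].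
Qed.

Lemma avoiding_subshift X b : closed_shift X -> shift_invariant X ->
  (exists z, X z /\ forall m, z m != b) -> subshift (fun x => X x /\ forall m, x m != b).
Proof.
move=> X_closed X_inv z_avoid; split=> //; split.
  move=> x x_lim; split.
    by apply: X_closed => n; have [y [[Xy _] ag]] := x_lim n; exists y.
  move=> m; have [y [[_ yb] xy]] := x_lim (absz m).
  by rewrite xy ?yb //; lia.
move=> x; split => [[Xx xb]|[Xx xb]]; split.
- exact: (X_inv x).1.
- by move=> m; apply: xb.
- exact: (X_inv x).2.
- by move=> m; have := xb (m - 1); rewrite /shiftmap subrK.
Qed.

Lemma avoid_everywhere X b : closed_shift X ->
  (forall N : nat, exists y, X y /\ forall m : int, (`|m| <= N)%N -> y m != b) ->
  exists z, X z /\ forall m, z m != b.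
Proof.
move=> X_closed avoid.
pose Y N := sval (cid (avoid N)).
have YP N : X (Y N) /\ forall m : int, (`|m| <= N)%N -> Y N m != b := svalP (cid (avoid N)).
have [z z_lim] := compactness Y.
exists z; split => [|m].
  apply: X_closed => n; have [k [_ ag]] := z_lim n.+1 0%N.
  by exists (Y k); split; [case: (YP k) | move=> i i_n; apply: ag; lia].
have [k [mk ag]] := z_lim (absz m).+1 (absz m).
by rewrite ag //; apply: (YP k).2.
Qed.

(* A letter missing from arbitrarily long words is missing from some point of
   X, and the points of X avoiding it would form a proper subshift. *)
Lemma minimal_recurrent X b : minimal_shift X -> inL X [:: b] ->
  exists N, forall w, inL X w -> (N <= size w)%N -> b \in w.
Proof.
move=> [[_ [X_closed X_inv]] X_min] Lb; apply: contrapT => /forallNP not_rec.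
have avoid N : exists y, X y /\ forall m : int, (`|m| <= N)%N -> y m != b.
  have [w /not_implyP [Lw /not_implyP [sw /negP bw]]] := (existsNP _).2 (not_rec N.*2.+1).
  have [x [i [Xx ew]]] := inLP Lw.
  exists (fun m => x (m + (i + N%:Z))); split; first exact: shift_invariant_translate X_inv Xx.
  move=> m mN; apply: contraNneq bw => <-.
  have -> : m + (i + N%:Z) = i + (absz (m + N%:Z))%:Z by lia.
  by rewrite ew; apply: mem_window; lia.
have [z [Xz zb]] := avoid_everywhere X_closed avoid.
have [x [i [Xx ew]]] := inLP Lb.
have sub_avoid := avoiding_subshift X_closed X_inv (ex_intro _ z (conj Xz zb)).
have [_ /(_ i)] := X_min _ sub_avoid (fun _ h => h.1) x Xx.
by case: ew; rewrite addr0 => ->; rewrite eqxx.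
Qed.

Lemma planar_language_of_shift X leL leR :
  minimal_shift X -> (forall a, inL X [:: a]) -> dendric X -> planar X leL leR ->
  planar_language (inL X) leL leR.
Proof.
move=> X_min X_letters X_dendric X_planar.
have behead a w : inL X (a :: w) -> inL X w.
  by move=> Law; exact: (inL_cat (u := [:: a]) Law).2.
have belast w b : inL X (rcons w b) -> inL X w by rewrite -cats1 => /inL_cat [].
split => //.
- move=> w /inLP [x [i [Xx ew]]]; exists (x (i - 1)).
  have -> : x (i - 1) :: w = window x (i - 1) (1 + size w).
    by rewrite window_cat /window /= addr0 subrK -/(window x i (size w)) -ew.
  exact: inL_window.
- move=> w /inLP [x [i [Xx ew]]]; exists (x (i + (size w)%:Z)).
  have -> : rcons w (x (i + (size w)%:Z)) = window x i (size w + 1).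
    by rewrite window_cat -ew /window /= addr0 cats1.
  exact: inL_window.
- move=> w Lw p p_edge; have [_ [w_conn _]] := X_dendric w Lw.
  have p_closed : closed (ext_edge X w) p.
    by case=> [a|b] [a'|b'] //=; rewrite inE /= => /p_edge // ->.
  have p_conn u v : u \in ext_vertices X w -> v \in ext_vertices X w -> p u = p v.
    by move=> uV vV; apply: closed_connect p_closed _ _ (w_conn _ _ uV vV).
  by split => [a a' La La'|b b' Lb Lb']; apply: p_conn;
    rewrite in_setU; apply/orP; (left + right); apply: imset_f; rewrite inE.
- move=> w a1 b1 a2 b2 L1 L2 na le.
  have Lw : inL X w by apply: (belast _ b1); apply: (behead a1).
  by apply: (X_planar w Lw a1 b1 a2 b2); rewrite ?inE ?na.
- by move=> b; apply: minimal_recurrent.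
Qed.
End ShiftLanguage.

Theorem mainTheorem20 (A : finType) (X : (int -> A) -> Prop)
    (leL leR : rel A) :
  minimal_shift X ->
  (forall a : A, inL X [:: a]) ->
  dendric X ->
  total_order leL -> total_order leR ->
  planar X leL leR ->
  (exists N, forall n, N <= n -> cmg_iso (GLn X n) (G_order leL)) /\
  (exists N, forall n, N <= n -> cmg_iso (GRn X n) (G_order leR)).
Proof.
move=> X_min X_letters X_dendric leL_tot leR_tot X_planar.
have HL := planar_language_of_shift X_min X_letters X_dendric X_planar.
have [[[x0 _] _] _] := X_min.
split.
  have [N realN] := realizes_G_order (x0 0%R) HL leL_tot leR_tot.
  by exists N => n Nn; apply: cmg_iso_realizes (G_order_uniq (x0 0%R) _) (realN n Nn).
have HR := planar_language_rev leL_tot leR_tot HL.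
have [N realN] := realizes_G_order (x0 0%R) HR leR_tot leL_tot.
exists N => n Nn; apply: cmg_iso_realizes (G_order_uniq (x0 0%R) _) _.
apply: (realizes_rev _ _ (realN n Nn)) => w; first by rewrite revK.
by apply/setP => b; rewrite !inE rev_cons revK.
Qed.
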